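(* Let $A,B$ be closed linear relations in $X^2$ such that $\{A,B\}$ is a dual pair with $(A^* )_s|_{D(B)}=B_s$ and $(B^* )_s|_{D(A)}=A_s$. Suppose $B^*(0)\cap N(A^* )=\{0\}$, $A^*(0)\cap N(B^* )=\{0\}$, and $\tilde A\in\mathrm{Ext}\{A,B\}$. Then: (i) $$n(A^*,B)=\dim(D(B^* )/D(\tilde A))+\dim(D(A^* )/D(\tilde A^* ))=\dim(D(\tilde A)/D(A))+\dim(D(\tilde A^* )/D(B)).$$ (ii) If $\tilde A$ is a quasi-selfadjoint extension of $\{A,B\}$, then $n(A^*,B)$ is even and $$\tfrac{1}{2}n(A^*,B)=\dim(D(B^* )/D(\tilde A))=\dim(D(A^* )/D(\tilde A^* ))=\dim(D(\tilde A)/D(A))=\dim(D(\tilde A^* )/D(B)).$$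
   Context: $X$ is a complex Hilbert space; linear relations are linear subspaces of $X^2=X\times X$, with domain $D(T)$, $N(T)=\{x:(x,0)\in T\}$, $T(0)=\{y:(0,y)\in T\}$. Adjoint: $T^*=\{(f,g):\langle g,x\rangle=\langle f,y\rangle\ \forall(x,y)\in T\}$. For closed $T$: $T_\infty=\{(0,y)\in T\}$, $T_s=T\ominus T_\infty$ (an operator with $D(T_s)=D(T)$). Closed relations $A,B$ form a dual pair $\{A,B\}$ if $A\subset B^*$ (equivalently $B\subset A^*$). $\mathrm{Ext}\{A,B\}$ is the set of closed relations $\tilde A$ with $A\subset\tilde A\subset B^*$. $n(A^*,B)=\dim(D(A^* )/D(B))$. An extension $\tilde A\in\mathrm{Ext}\{A,B\}$ is quasi-selfadjoint if $\dim(D(\tilde A)/D(A))=\dim(D(\tilde A^* )/D(B))$. *)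

From mathcomp Require Import all_boot all_order all_algebra.
From mathcomp Require Import complex.
From mathcomp Require Import reals boolp.
Set Implicit Arguments. Unset Strict Implicit. Unset Printing Implicit Defensive.
Import Order.TTheory GRing.Theory Num.Theory.
Local Open Scope ring_scope.
Local Open Scope complex_scope.

(* Extended natural numbers: Some n = n, None = infinity. *)
Definition enat := option nat.
Definition eadd (a b : enat) : enat :=
  match a, b with Some m, Some n => Some (m + n)%N | _, _ => None end.

Section LinearRelations.
Variable R : realType.
Variable X : lmodType R[i].
Variable ip : X -> X -> R[i].

Definition inner_product : Prop :=
  [/\ (forall (a : R[i]) (x y z : X), ip (a *: x + y) z = a * ip x z + ip y z),
      (forall x y : X, ip y x = (ip x y)^*),
      (forall x : X, 0 <= ip x x) &
      (forall x : X, ip x x = 0 -> x = 0)].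

Definition cvg_to (u : nat -> X) (x : X) : Prop :=
  forall eps : R[i], 0 < eps -> exists N : nat,
    forall n, (N <= n)%N -> ip (u n - x) (u n - x) < eps.
Definition cauchy (u : nat -> X) : Prop :=
  forall eps : R[i], 0 < eps -> exists N : nat,
    forall m n, (N <= m)%N -> (N <= n)%N -> ip (u m - u n) (u m - u n) < eps.

Definition hilbert : Prop :=
  inner_product /\ (forall u, cauchy u -> exists x, cvg_to u x).

Definition ip2 (p q : X * X) : R[i] := ip p.1 q.1 + ip p.2 q.2.

Definition cvg2_to (u : nat -> X * X) (p : X * X) : Prop :=
  forall eps : R[i], 0 < eps -> exists N : nat,
    forall n, (N <= n)%N ->
      ip2 ((u n).1 - p.1, (u n).2 - p.2) ((u n).1 - p.1, (u n).2 - p.2) < eps.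

Definition subspace (U : X -> Prop) : Prop :=
  U 0 /\ forall (a : R[i]) x y, U x -> U y -> U (a *: x + y).

Definition linrel (T : X * X -> Prop) : Prop :=
  T (0, 0) /\ forall (a : R[i]) p q, T p -> T q -> T (a *: p.1 + q.1, a *: p.2 + q.2).

Definition closed2 (T : X * X -> Prop) : Prop :=
  forall u p, (forall n, T (u n)) -> cvg2_to u p -> T p.

Definition closed_linrel (T : X * X -> Prop) : Prop := linrel T /\ closed2 T.

Definition dom (T : X * X -> Prop) (x : X) : Prop := exists y, T (x, y).
Definition ker (T : X * X -> Prop) (x : X) : Prop := T (x, 0).
Definition mul0 (T : X * X -> Prop) (y : X) : Prop := T (0, y).

Definition adjoint (T : X * X -> Prop) (p : X * X) : Prop :=
  forall x y, T (x, y) -> ip p.2 x = ip p.1 y.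

(* T_oo = {(0,y) in T};  T_s = T (-) T_oo (orthogonal complement in T) *)
Definition rinf (T : X * X -> Prop) (p : X * X) : Prop := T p /\ p.1 = 0.
Definition rs (T : X * X -> Prop) (p : X * X) : Prop :=
  T p /\ forall q, rinf T q -> ip2 p q = 0.

Definition restr (T : X * X -> Prop) (D : X -> Prop) (p : X * X) : Prop :=
  T p /\ D p.1.

Definition subrel (S T : X * X -> Prop) : Prop := forall p, S p -> T p.

Definition dual_pair (A B : X * X -> Prop) : Prop :=
  closed_linrel A /\ closed_linrel B /\ subrel A (adjoint B).

Definition Ext (A B At : X * X -> Prop) : Prop :=
  closed_linrel At /\ subrel A At /\ subrel At (adjoint B).

(* dim(U/V) for subspaces V of U: equals n iff there are n vectors of U
   linearly independent modulo V and spanning U modulo V; infinite otherwise *)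
Definition codim_fin (U V : X -> Prop) (n : nat) : Prop :=
  exists v : 'I_n -> X,
    [/\ (forall i, U (v i)),
        (forall c : 'I_n -> R[i], V (\sum_i c i *: v i) -> forall i, c i = 0) &
        (forall u, U u -> exists (c : 'I_n -> R[i]) (w : X),
            V w /\ u = \sum_i c i *: v i + w)].

Definition qdim (U V : X -> Prop) : enat :=
  match pselect (exists n, codim_fin U V n) with
  | left h => Some (projT1 (cid h))
  | right _ => None
  end.

Definition ndef (A B : X * X -> Prop) : enat := qdim (dom (adjoint A)) (dom B).

Definition quasi_selfadjoint (A B At : X * X -> Prop) : Prop :=
  Ext A B At /\ qdim (dom At) (dom A) = qdim (dom (adjoint At)) (dom B).

End LinearRelations.

From Pilot Require Import Defs.
From mathcomp Require Import all_boot all_order all_algebra.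
From mathcomp Require Import complex.
From mathcomp Require Import reals boolp.
From mathcomp Require Import classical_sets ring lra.
Import Order.TTheory GRing.Theory Num.Theory.

(* Write [T'] for the adjoint of [T].  The assumptions on the operator parts
   and on [B'(0)] and [A'(0)] force [B'(0) <= A(0)] and [A'(0) <= B(0)].  For
   linear relations [P <= Q] and [P1 <= Q1] with [Q1 <= P'], [P1 <= Q'] and
   multivalued parts so related, the form [<f, y> - <h, x>], for [(x, y)] in [Q]
   and [(f, h)] in [Q1], depends only on [x] and [f] and puts [D(Q)/D(P)] and
   [D(Q1)/D(P1)] in duality, so these quotients have equal dimension.  Pairing
   [A <= At] with [At' <= A'], and [At <= B'] with [B <= At'], gives
   [dim D(At)/D(A) = dim D(A')/D(At')] and [dim D(B')/D(At) = dim D(At')/D(B)];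
   (i) follows by additivity of codimension along [D(B) <= D(At') <= D(A')],
   and (ii) from (i) and quasi-selfadjointness. *)

Set Implicit Arguments. Unset Strict Implicit. Unset Printing Implicit Defensive.

Local Open Scope ring_scope.
Local Open Scope complex_scope.

Section Codimension.
Variable R : realType.
Variable X : lmodType R[i].
Implicit Types U V W : X -> Prop.

Definition indep_mod V n (v : 'I_n -> X) :=
  forall c : 'I_n -> R[i], V (\sum_i c i *: v i) -> forall i, c i = 0.

Definition span_mod V n (v : 'I_n -> X) (u : X) :=
  exists (c : 'I_n -> R[i]) (w : X), V w /\ u = \sum_i c i *: v i + w.

Lemma subspaceP V a x y : subspace V -> V x -> V y -> V (a *: x + y).
Proof. by case=> _; apply. Qed.

Lemma subspaceD V x y : subspace V -> V x -> V y -> V (x + y).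
Proof. by move=> sV Vx Vy; have := subspaceP 1 sV Vx Vy; rewrite scale1r. Qed.

Lemma subspaceZ V a x : subspace V -> V x -> V (a *: x).
Proof. by move=> sV Vx; have := subspaceP a sV Vx (proj1 sV); rewrite addr0. Qed.

Lemma subspaceB V x y : subspace V -> V x -> V y -> V (x - y).
Proof.
by move=> sV Vx Vy; rewrite -scaleN1r addrC; apply: subspaceP.
Qed.

Lemma subspace_sum V n (c : 'I_n -> R[i]) (v : 'I_n -> X) :
  subspace V -> (forall i, V (v i)) -> V (\sum_i c i *: v i).
Proof.
move=> sV Vv; apply: (big_ind V); first exact: proj1 sV.
  by move=> x y; apply: subspaceD.
by move=> i _; apply: subspaceZ.
Qed.

Lemma row_ker_neq0 m n (C : 'M[R[i]]_(m, n)) : (n < m)%N ->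
  exists2 d : 'rV_m, d != 0 & d *m C = 0.
Proof.
move=> lt_nm; have : kermx C != 0.
  rewrite kermx_eq0 /row_free; apply/negP => /eqP rkC.
  by have := rank_leq_col C; rewrite rkC leqNgt lt_nm.
case: (pselect (exists i, row i (kermx C) != 0)) => [[i nzi] _|none].
  by exists (row i (kermx C)) => //; apply/sub_kermxP; exact: row_sub.
case/negP; apply/eqP/row_matrixP => i; rewrite row0.
by apply/eqP; apply: contra_notT none => nzi; exists i.
Qed.

Lemma indep_mod_le_span V n m (v : 'I_n -> X) (w : 'I_m -> X) : subspace V ->
  (forall j, span_mod V v (w j)) -> indep_mod V w -> (m <= n)%N.
Proof.
move=> sV wv iw; rewrite leqNgt; apply/negP => lt_nm.
have [f /choice[r hr]] := choice wv.
have [d dnz dC] := row_ker_neq0 (\matrix_(j < m, i < n) f j i) lt_nm.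
have Vdw : V (\sum_j d 0 j *: w j).
  have -> : \sum_j d 0 j *: w j =
      \sum_i (d *m \matrix_(j, i) f j i) 0 i *: v i + \sum_j d 0 j *: r j.
    under eq_bigr => j _ do rewrite (proj2 (hr j)) scalerDr.
    rewrite big_split /=; congr (_ + _).
    under eq_bigr => j _ do rewrite scaler_sumr.
    rewrite exchange_big /=; apply: eq_bigr => i _.
    rewrite !mxE scaler_suml; apply: eq_bigr => j _.
    by rewrite mxE scalerA.
  rewrite dC; under eq_bigr => i _ do rewrite mxE scale0r.
  by rewrite big1_eq add0r; apply: subspace_sum => // j; exact: (proj1 (hr j)).
by case/negP: dnz; apply/eqP/rowP => j; rewrite mxE (iw _ Vdw j).
Qed.

Lemma codim_fin_uniq U V n m : subspace V ->
  codim_fin U V n -> codim_fin U V m -> n = m.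
Proof.
move=> sV [v [Uv iv sv]] [w [Uw iw sw]]; apply/eqP; rewrite eqn_leq.
rewrite (indep_mod_le_span sV (fun j => sw _ (Uv j)) iv).
by rewrite (indep_mod_le_span sV (fun j => sv _ (Uw j)) iw).
Qed.

Definition cat_fun (T : Type) a b (f : 'I_a -> T) (g : 'I_b -> T)
    (i : 'I_(a + b)) : T :=
  match split i with inl j => f j | inr j => g j end.

Lemma cat_fun_lshift (T : Type) a b (f : 'I_a -> T) (g : 'I_b -> T) j :
  cat_fun f g (lshift b j) = f j.
Proof. by rewrite /cat_fun (unsplitK (inl _ j)). Qed.

Lemma cat_fun_rshift (T : Type) a b (f : 'I_a -> T) (g : 'I_b -> T) j :
  cat_fun f g (rshift a j) = g j.
Proof. by rewrite /cat_fun (unsplitK (inr _ j)). Qed.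

Lemma ord_add_ind a b (P : 'I_(a + b) -> Prop) :
  (forall j, P (lshift b j)) -> (forall j, P (rshift a j)) -> forall i, P i.
Proof. by move=> Pl Pr i; rewrite -(splitK i); case: (split i) => j /=. Qed.

Lemma sum_cat_fun a b (c : 'I_(a + b) -> R[i]) (v : 'I_a -> X) (w : 'I_b -> X) :
  \sum_i c i *: cat_fun v w i =
  \sum_j c (lshift b j) *: v j + \sum_j c (rshift a j) *: w j.
Proof.
rewrite big_split_ord /=; congr (_ + _); apply: eq_bigr => j _.
  by rewrite cat_fun_lshift.
by rewrite cat_fun_rshift.
Qed.

Lemma indep_mod_cat1 V k (w : 'I_k -> X) u : subspace V ->
  indep_mod V w -> ~ span_mod V w u -> indep_mod V (cat_fun w (fun _ : 'I_1 => u)).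
Proof.
move=> sV iw uw c; rewrite sum_cat_fun big_ord1 /=.
set S := (s in V s) => VS; set a := c (rshift k ord0).
have a0 : a = 0.
  have [//|anz] := eqVneq a 0; case: uw.
  exists (fun j => - a^-1 * c (lshift 1 j)), (a^-1 *: S).
  split; first exact: subspaceZ.
  rewrite /S scalerDr scalerA mulVf // scale1r addrC -addrA.
  rewrite (_ : \sum_i (- a^-1 * c (lshift 1 i)) *: w i =
     - (a^-1 *: \sum_j c (lshift 1 j) *: w j)); last first.
    rewrite scaler_sumr -sumrN; apply: eq_bigr => j _.
    by rewrite scalerA mulNr scaleNr.
  by rewrite addrCA subrr addr0.
have cl0 : forall j, c (lshift 1 j) = 0.
  by apply: iw; move: VS; rewrite /S -/a a0 scale0r addr0.
by apply: ord_add_ind => // j; rewrite (ord1 j).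
Qed.

(* A maximal family independent modulo [V] also spans [U] modulo [V]. *)
Lemma codim_fin_bounded U V n : subspace U -> subspace V ->
  (forall k (w : 'I_k -> X), (forall j, U (w j)) -> indep_mod V w -> (k <= n)%N) ->
  exists k, (k <= n)%N /\ codim_fin U V k.
Proof.
move=> sU sV bnd.
pose P k := `[< exists w : 'I_k -> X, (forall j, U (w j)) /\ indep_mod V w >].
have P0 : exists k, P k.
  by exists 0%N; apply/asboolP; exists (fun => 0); split=> [[]|c _ []].
have Pn k : P k -> (k <= n)%N by move=> /asboolP[w [Uw iw]]; apply: bnd Uw iw.
case: (ex_maxnP P0 Pn) => k /asboolP[w [Uw iw]] kmax.
exists k; split; first exact: bnd Uw iw.
exists w; split => // u Uu; apply: contrapT => uw.
have : P (k + 1)%N.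
  apply/asboolP; exists (cat_fun w (fun _ : 'I_1 => u)); split.
    by apply: ord_add_ind => j; rewrite ?cat_fun_lshift ?cat_fun_rshift.
  exact: indep_mod_cat1.
by move/kmax; rewrite addn1 ltnn.
Qed.

Lemma qdim_fin U V n : subspace V -> codim_fin U V n -> qdim U V = Some n.
Proof.
move=> sV Un; rewrite /qdim; case: pselect => [h|[]]; last by exists n.
by congr Some; apply: codim_fin_uniq sV (projT2 (cid h)) Un.
Qed.

Lemma qdim_inf U V : ~ (exists n, codim_fin U V n) -> qdim U V = None.
Proof. by move=> h; rewrite /qdim; case: pselect. Qed.

Lemma codim_fin_trans U V W a b : subspace V -> subspace W ->
  (forall x, W x -> V x) -> (forall x, V x -> U x) ->
  codim_fin U V a -> codim_fin V W b -> codim_fin U W (a + b).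
Proof.
move=> sV sW WV VU [v [Uv iv sv]] [w [Vw iw sw]].
exists (cat_fun v w); split.
- by apply: ord_add_ind => j; rewrite ?cat_fun_lshift ?cat_fun_rshift //; apply: VU.
- move=> c; rewrite sum_cat_fun => Wc.
  have Vcw : V (\sum_j c (rshift a j) *: w j) by apply: subspace_sum.
  have Vcv : V (\sum_j c (lshift b j) *: v j).
    by have := subspaceB sV (WV _ Wc) Vcw; rewrite addrK.
  have cl0 := iv _ Vcv.
  have cr0 : forall j, c (rshift a j) = 0.
    apply: iw; move: Wc; rewrite big1 ?add0r // => j _.
    by rewrite cl0 scale0r.
  exact: ord_add_ind.
- move=> u Uu; have [c [w1 [Vw1 ->]]] := sv u Uu.
  have [d [w2 [Ww2 ->]]] := sw w1 Vw1.
  exists (cat_fun c d), w2; split => //; rewrite sum_cat_fun addrA.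
  by congr (_ + _ + _); apply: eq_bigr => j _;
    rewrite ?cat_fun_lshift ?cat_fun_rshift.
Qed.

Lemma codim_fin_split U V W n : subspace U -> subspace V -> subspace W ->
  (forall x, W x -> V x) -> (forall x, V x -> U x) ->
  codim_fin U W n ->
  (exists a, codim_fin U V a) /\ (exists b, codim_fin V W b).
Proof.
move=> sU sV sW WV VU [v [Uv iv sv]]; split.
- have [a [_ ?]] : exists a, (a <= n)%N /\ codim_fin U V a; last by exists a.
  apply: codim_fin_bounded => // k w Uw iw.
  by apply: (indep_mod_le_span sW (v := v)) => [j|c /WV]; [apply: sv | apply: iw].
- have [b [_ ?]] : exists b, (b <= n)%N /\ codim_fin V W b; last by exists b.
  apply: codim_fin_bounded => // k w Vw iw.
  by apply: (indep_mod_le_span sW (v := v) _ iw) => j; apply/sv/VU.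
Qed.

Lemma qdim_trans U V W : subspace U -> subspace V -> subspace W ->
  (forall x, W x -> V x) -> (forall x, V x -> U x) ->
  qdim U W = eadd (qdim U V) (qdim V W).
Proof.
move=> sU sV sW WV VU.
case: (pselect (exists n, codim_fin U W n)) => [[n Wn]|Wn].
  have [[a Va] [b Wb]] := codim_fin_split sU sV sW WV VU Wn.
  rewrite (qdim_fin sV Va) (qdim_fin sW Wb).
  exact: qdim_fin sW (codim_fin_trans sV sW WV VU Va Wb).
rewrite (qdim_inf Wn).
case: (pselect (exists a, codim_fin U V a)) => [[a Va]|Va]; last by rewrite (qdim_inf Va).
case: (pselect (exists b, codim_fin V W b)) => [[b Wb]|Wb].
  by case: Wn; exists (a + b)%N; exact: codim_fin_trans Va Wb.
by rewrite (qdim_inf Wb); case: (qdim U V).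
Qed.

Definition separating_pairing U V U' V' (g : X -> X -> R[i]) :=
  [/\ (forall x f, V x -> U' f -> g x f = 0),
      (forall x1 x2 a f, U x1 -> U x2 -> U' f -> g x1 f = 0 -> g x2 f = 0 ->
         g (a *: x1 + x2) f = 0),
      (forall x f1 f2 a, U x -> U' f1 -> U' f2 ->
         g x (a *: f1 + f2) = a * g x f1 + g x f2) &
      (forall f, U' f -> (forall x, U x -> g x f = 0) -> V' f)].

Lemma linear_on_sum U (l : X -> R[i]) k (d : 'I_k -> R[i]) (w : 'I_k -> X) :
  subspace U -> (forall j, U (w j)) ->
  (forall f1 f2 a, U f1 -> U f2 -> l (a *: f1 + f2) = a * l f1 + l f2) ->
  l (\sum_j d j *: w j) = \sum_j d j * l (w j).
Proof.
move=> sU Uw lin.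
have l0 : l 0 = 0.
  have := lin 0 0 1 (proj1 sU) (proj1 sU); rewrite scaler0 addr0 mul1r => h.
  by apply: (addrI (l 0)); rewrite addr0 -h.
suff [] : U (\sum_j d j *: w j) /\ l (\sum_j d j *: w j) = \sum_j d j * l (w j).
  by [].
apply: (big_rec2 (fun f s => U f /\ l f = s)) => [|j f s _ [Uf <-]].
  by split => //; exact: proj1 sU.
by split; [apply: subspaceP | rewrite lin].
Qed.

(* An [f] of [U'] annihilated by the [n] generators of [U] modulo [V] is in
   [V']; hence more than [n] vectors of [U'] are dependent modulo [V']. *)
Lemma codim_fin_pairing U V U' V' g n :
  subspace U -> subspace V -> subspace U' -> subspace V' ->
  separating_pairing U V U' V' g ->
  codim_fin U V n -> exists k, (k <= n)%N /\ codim_fin U' V' k.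
Proof.
move=> sU sV sU' sV' [gV gU glin gV'] [v [Uv iv sv]].
apply: codim_fin_bounded => // k w Uw iw; rewrite leqNgt; apply/negP => lt_nk.
have [d dnz dC] := row_ker_neq0 (\matrix_(j < k, i < n) g (v i) (w j)) lt_nk.
pose f := \sum_j d 0 j *: w j.
have Uf : U' f by apply: subspace_sum.
have gvf i : g (v i) f = 0.
  rewrite /f (linear_on_sum _ sU' Uw) => [|f1 f2 a ? ?]; last exact: glin.
  transitivity ((d *m \matrix_(j, i) g (v i) (w j)) 0 i); last by rewrite dC mxE.
  by rewrite mxE; apply: eq_bigr => j _; rewrite mxE.
have gxf x : U x -> g x f = 0.
  move=> Ux; have [c [w0 [Vw0 ex]]] := sv x Ux.
  have s_ann : subspace (fun y => U y /\ g y f = 0).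
    split; first by split; [exact: proj1 sU | apply: gV => //; exact: proj1 sV].
    by move=> a y1 y2 [U1 g1] [U2 g2]; split; [apply: subspaceP | apply: gU].
  have Pc : U (\sum_i c i *: v i) /\ g (\sum_i c i *: v i) f = 0.
    by apply: (subspace_sum _ s_ann) => i; split.
  have Uw0 : U w0.
    by have := subspaceB sU Ux Pc.1; rewrite ex addrC addKr.
  suff [] : U x /\ g x f = 0 by [].
  by rewrite ex; apply: (subspaceD s_ann Pc); split; last exact: gV.
by case/negP: dnz; apply/eqP/rowP => j; rewrite mxE (iw _ (gV' f Uf gxf) j).
Qed.

Lemma qdim_pairing U V U' V' (g g' : X -> X -> R[i]) :
  subspace U -> subspace V -> subspace U' -> subspace V' ->
  separating_pairing U V U' V' g -> separating_pairing U' V' U V g' ->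
  qdim U V = qdim U' V'.
Proof.
move=> sU sV sU' sV' g_sep g'_sep.
case: (pselect (exists n, codim_fin U V n)) => [[n Vn]|Vn].
  have [k [le_kn V'k]] := codim_fin_pairing sU sV sU' sV' g_sep Vn.
  have [m [le_mk Vm]] := codim_fin_pairing sU' sV' sU sV g'_sep V'k.
  rewrite (qdim_fin sV Vn) (qdim_fin sV' V'k); congr Some; apply/eqP.
  by rewrite eqn_leq le_kn andbT -(codim_fin_uniq sV Vm Vn).
rewrite (qdim_inf Vn) qdim_inf // => -[k V'k]; apply: Vn.
by have [m [_ Vm]] := codim_fin_pairing sU' sV' sU sV g'_sep V'k; exists m.
Qed.

End Codimension.

(* The bare [Re] would resolve to [Num.Theory.Re]. *)
Section ComplexParts.
Variable R : realType.

Lemma ReD (a b : R[i]) : complex.Re (a + b) = complex.Re a + complex.Re b.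
Proof. by case: a; case: b. Qed.
Lemma ReN (a : R[i]) : complex.Re (- a) = - complex.Re a.
Proof. by case: a. Qed.
Lemma Re_realM (r : R) (a : R[i]) : complex.Re (r%:C * a) = r * complex.Re a.
Proof. by case: a => x y /=; rewrite mul0r subr0. Qed.
Lemma Re_conj (a : R[i]) : complex.Re (Num.conj a) = complex.Re a.
Proof. by case: a. Qed.
Lemma conj_real (r : R) : Num.conj (r%:C) = r%:C.
Proof. exact: conjc_real. Qed.

Lemma Re_mulcJ_ge0 (z : R[i]) : 0 <= complex.Re (z * Num.conj z).
Proof. by case: z => a b; rewrite /= -mulrN opprK; nra. Qed.

Lemma Re_mulcJ_eq0 (z : R[i]) : complex.Re (z * Num.conj z) = 0 -> z = 0.
Proof.
case: z => a b; rewrite /= -mulrN opprK => abs0.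
have a0 : a = 0 by nra.
have b0 : b = 0 by nra.
by rewrite a0 b0.
Qed.

Lemma gt0_real_complex (e : R[i]) : 0 < e -> e = (complex.Re e)%:C /\ 0 < complex.Re e.
Proof. by case: e => a b; rewrite ltcE /= => /andP[/eqP -> ?]. Qed.

End ComplexParts.

Section InnerProduct.
Variable R : realType.
Variable V : lmodType R[i].
Variable ip : V -> V -> R[i].
Hypothesis ipP : inner_product ip.

Lemma ipL a x y z : ip (a *: x + y) z = a * ip x z + ip y z.
Proof. by case: ipP. Qed.
Lemma ipC x y : ip y x = (ip x y)^*.
Proof. by case: ipP. Qed.
Lemma ip_ge0 x : 0 <= ip x x.
Proof. by case: ipP. Qed.
Lemma ip_eq0 x : ip x x = 0 -> x = 0.
Proof. by case: ipP => _ _ _; apply. Qed.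

Lemma ip0l z : ip 0 z = 0.
Proof.
have := ipL 1 0 0 z; rewrite scaler0 addr0 mul1r => h.
by apply: (addrI (ip 0 z)); rewrite addr0 -h.
Qed.
Lemma ipDl x y z : ip (x + y) z = ip x z + ip y z.
Proof. by have := ipL 1 x y z; rewrite scale1r mul1r. Qed.
Lemma ipZl a x z : ip (a *: x) z = a * ip x z.
Proof. by have := ipL a x 0 z; rewrite addr0 ip0l addr0. Qed.
Lemma ipNl x z : ip (- x) z = - ip x z.
Proof. by rewrite -scaleN1r ipZl mulN1r. Qed.
Lemma ipBl x y z : ip (x - y) z = ip x z - ip y z.
Proof. by rewrite ipDl ipNl. Qed.
Lemma ip0r z : ip z 0 = 0.
Proof. by rewrite ipC ip0l conjc0. Qed.
Lemma ipDr x y z : ip z (x + y) = ip z x + ip z y.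
Proof. by rewrite ipC ipDl rmorphD /= -!ipC. Qed.
Lemma ipZr a x z : ip z (a *: x) = a^* * ip z x.
Proof. by rewrite ipC ipZl rmorphM /= -ipC. Qed.
Lemma ipNr x z : ip z (- x) = - ip z x.
Proof. by rewrite ipC ipNl rmorphN /= -ipC. Qed.
Lemma ipBr x y z : ip z (x - y) = ip z x - ip z y.
Proof. by rewrite ipDr ipNr. Qed.

Definition sqnorm x := complex.Re (ip x x).

Lemma ipxx x : ip x x = (sqnorm x)%:C.
Proof. by rewrite /sqnorm RRe_real // ger0_real // ip_ge0. Qed.
Lemma sqnorm_ge0 x : 0 <= sqnorm x.
Proof. by rewrite -lecR -ipxx ip_ge0. Qed.
Lemma sqnorm_eq0 x : sqnorm x = 0 -> x = 0.
Proof. by move=> h; apply: ip_eq0; rewrite ipxx h. Qed.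

Lemma sqnormD x y : sqnorm (x + y) = sqnorm x + sqnorm y + 2 * complex.Re (ip x y).
Proof. by rewrite /sqnorm ipDl !ipDr (ipC x y) !ReD Re_conj; lra. Qed.
Lemma sqnormB x y : sqnorm (x - y) = sqnorm x + sqnorm y - 2 * complex.Re (ip x y).
Proof. by rewrite /sqnorm ipBl !ipBr (ipC x y) !(ReD, ReN) Re_conj; lra. Qed.
Lemma sqnormN x : sqnorm (- x) = sqnorm x.
Proof. by rewrite /sqnorm ipNl ipNr opprK. Qed.
Lemma sqnormZ (r : R) x : sqnorm (r%:C *: x) = r ^+ 2 * sqnorm x.
Proof. by rewrite /sqnorm ipZl ipZr conj_real mulrA -rmorphM Re_realM. Qed.

Lemma parallelogram x y :
  sqnorm (x + y) + sqnorm (x - y) = 2 * sqnorm x + 2 * sqnorm y.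
Proof. by rewrite sqnormD sqnormB; lra. Qed.

(* expansion of [0 <= sqnorm (t x - y)] *)
Lemma Re_ip_le (t : R) x y : 0 < t ->
  2 * t * complex.Re (ip x y) <= t ^+ 2 * sqnorm x + sqnorm y.
Proof.
move=> t0; have := sqnorm_ge0 (t%:C *: x - y).
by rewrite sqnormB sqnormZ ipZl Re_realM; lra.
Qed.

Definition seq_closed (M : V -> Prop) :=
  forall u x, (forall n, M (u n)) -> cvg_to ip u x -> M x.

Lemma inv_succ_small (e : R) : 0 < e ->
  exists K : nat, forall n, (K <= n)%N -> 4 * n.+1%:R^-1 < e.
Proof.
move=> e0; exists (Num.Def.archi_bound (4 / e)) => n le_Kn.
have := @archi_boundP R (4 / e) (ltW (divr_gt0 (ltr0Sn R 3) e0)).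
rewrite -(ler_nat R) in le_Kn; rewrite ltr_pdivrMr // => lt4.
rewrite ltr_pdivrMr ?ltr0Sn // mulrC.
have : (n%:R : R) < n.+1%:R by rewrite ltr_nat.
nra.
Qed.

Section Projection.
Variables (M : V -> Prop) (v : V).
Hypothesis sM : subspace M.

Lemma minimizer_orthogonal x : M x ->
  (forall m, M m -> sqnorm (v - x) <= sqnorm (v - m)) ->
  forall w, M w -> ip (v - x) w = 0.
Proof.
move=> Mx xmin w Mw; set e := v - x; set z := ip e w.
have s_ge0 := Re_mulcJ_ge0 z; have s_eq0 := @Re_mulcJ_eq0 _ z.
set s := complex.Re (z * Num.conj z) in s_ge0 s_eq0.
(* comparing [x] with [x + t z w] gives [0 <= t^2 s |w|^2 - 2 t s] *)
have le_t t : 0 < t -> 0 <= t * s * sqnorm w - 2 * s.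
  move=> t0; have := xmin _ (subspaceP (t%:C * z) sM Mw Mx).
  rewrite (_ : v - ((t%:C * z) *: w + x) = e - (t%:C * z) *: w).
    2: by rewrite opprD addrA addrAC.
  rewrite [sqnorm (e - _)]sqnormB.
  have -> : sqnorm ((t%:C * z) *: w) = t ^+ 2 * s * sqnorm w.
    rewrite /sqnorm ipZl ipZr ipxx rmorphM /= conj_real.
    have -> : t%:C * z * (t%:C * Num.conj z * (sqnorm w)%:C) =
              (t ^+ 2 * sqnorm w)%:C * (z * Num.conj z).
      by rewrite rmorphM rmorphXn /=; ring.
    by rewrite Re_realM /s; ring.
  have -> : complex.Re (ip e ((t%:C * z) *: w)) = t * s.
    by rewrite ipZr rmorphM /= conj_real -/z -mulrA [Num.conj z * z]mulrC Re_realM.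
  move=> h; have : 0 <= t * (t * s * sqnorm w - 2 * s) by nra.
  by rewrite pmulr_rge0.
have w_ge0 := sqnorm_ge0 w.
have := le_t (1 / (sqnorm w + 1)) (ltac:(rewrite divr_gt0 //; lra)).
have : 1 / (sqnorm w + 1) * sqnorm w < 1 by rewrite mulrC mulrA ltr_pdivrMr; lra.
by move=> ? ?; apply: s_eq0; nra.
Qed.

Section MinimizingSequence.
Variables (d : R) (ms : nat -> V).
Hypothesis d_le : forall m, M m -> d <= sqnorm (v - m).
Hypothesis Mms : forall k, M (ms k).
Hypothesis ms_lt : forall k, sqnorm (v - ms k) < d + k.+1%:R^-1.

(* parallelogram law at [v - ms j], [v - ms k], with midpoint in [M] *)
Lemma minimizing_sqnormB j k :
  sqnorm (ms j - ms k) <= 2 * sqnorm (v - ms j) + 2 * sqnorm (v - ms k) - 4 * d.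
Proof.
have := parallelogram (v - ms j) (v - ms k).
set mid := (2^-1 : R)%:C *: (ms j + ms k).
have Mmid : M mid.
  by have := subspaceZ (2^-1 : R)%:C sM (subspaceD sM (Mms j) (Mms k)).
have -> : v - ms j + (v - ms k) = (2 : R)%:C *: (v - mid).
  rewrite scalerBr /mid scalerA -rmorphM mulfV ?pnatr_eq0 // scale1r.
  by rewrite rmorph_nat scaler_nat mulr2n opprD addrACA.
have -> : v - ms j - (v - ms k) = - (ms j - ms k).
  by rewrite opprB addrC addrA subrK opprB.
rewrite sqnormZ sqnormN expr2 => eq_par.
by have := d_le Mmid; lra.
Qed.

Lemma minimizing_cauchy : cauchy ip ms.
Proof.
move=> eps /gt0_real_complex[-> e0]; have [K lt_e] := inv_succ_small e0.
exists K => m n le_Km le_Kn; rewrite ipxx ltcR.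
have := minimizing_sqnormB m n; have := ms_lt m; have := ms_lt n.
have := lt_e _ le_Km; have := lt_e _ le_Kn.
by move: (m.+1%:R : R) (n.+1%:R : R) => a b; lra.
Qed.

Lemma minimizing_limit x : 0 <= d -> cvg_to ip ms x -> sqnorm (v - x) <= d.
Proof.
move=> d_ge0 ms_x; apply/ler_addgt0Pr => eps e0.
set dl := eps / (d + 4 + eps).
have dl0 : 0 < dl by rewrite divr_gt0 //; lra.
have dl1 : dl <= 1 by rewrite ler_pdivrMr; lra.
have dl_le : dl * (d + 4) <= eps by rewrite /dl mulrC mulrA ler_pdivrMr; nra.
have [N1 lt1] := ms_x _ (ltac:(by rewrite ltcR mulr_gt0) : 0 < (dl * dl)%:C).
have [N2 lt2] := inv_succ_small (mulr_gt0 (ltr0Sn R 3) dl0).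
pose n := maxn N1 N2.
have h1 : sqnorm (ms n - x) < dl * dl.
  by rewrite -ltcR -ipxx; apply: lt1; rewrite leq_maxl.
have h2 : sqnorm (v - ms n) < d + dl.
  by have := lt2 n (leq_maxr _ _); have := ms_lt n; move: (n.+1%:R : R) => a; lra.
(* [2 Re <v - ms n, ms n - x> <= dl |v - ms n|^2 + |ms n - x|^2 / dl],
   which is [< dl (d + dl + 1)] *)
have hc := Re_ip_le (v - ms n) (ms n - x) dl0.
rewrite (_ : v - x = (v - ms n) + (ms n - x)); last by rewrite addrA subrK.
rewrite sqnormD.
have := sqnorm_ge0 (v - ms n); have := sqnorm_ge0 (ms n - x).
move: h1 h2 hc; move: (sqnorm (v - ms n)) (sqnorm (ms n - x)) (complex.Re _).
move=> a b c h1 h2 hc b_ge0 a_ge0.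
have : dl * (a + b + 2 * c) <= dl * (d + eps) by nra.
by rewrite ler_pM2l.
Qed.

End MinimizingSequence.

Lemma exists_minimizer : (forall u, cauchy ip u -> exists x, cvg_to ip u x) ->
  seq_closed M ->
  exists2 x, M x & forall m, M m -> sqnorm (v - x) <= sqnorm (v - m).
Proof.
move=> complete cM.
pose E r := exists2 m, M m & r = sqnorm (v - m).
have E_inf : has_inf E.
  split; first by exists (sqnorm (v - 0)); exists 0 => //; exact: proj1 sM.
  by exists 0 => r [m _ ->]; apply: sqnorm_ge0.
have d_le m : M m -> inf E <= sqnorm (v - m).
  by move=> Mm; apply: (ge_inf E_inf.2); exists m.
have d_ge0 : 0 <= inf E.
  apply: lb_le_inf; first exact: E_inf.1.
  by move=> r [m _ ->]; apply: sqnorm_ge0.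
have : forall k : nat, exists m, M m /\ sqnorm (v - m) < inf E + k.+1%:R^-1.
  move=> k; have [_ [m Mm ->] ?] := inf_adherent (E := E) (eps := k.+1%:R^-1)
    (ltac:(by rewrite invr_gt0 ltr0Sn)) E_inf.
  by exists m.
case/choice => ms ms_min.
have [x ms_x] := complete ms (minimizing_cauchy d_le (fun k => (ms_min k).1)
  (fun k => (ms_min k).2)).
exists x; first by apply: (cM ms) => // k; case: (ms_min k).
move=> m Mm; apply: le_trans (d_le _ Mm).
exact: (minimizing_limit (fun k => (ms_min k).2) d_ge0 ms_x).
Qed.

Lemma orthogonal_projection : hilbert ip -> seq_closed M ->
  exists m, M m /\ forall w, M w -> ip (v - m) w = 0.
Proof.
move=> [_ complete] cM; have [x Mx xmin] := exists_minimizer complete cM.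
by exists x; split => //; apply: minimizer_orthogonal.
Qed.

End Projection.

End InnerProduct.

Section ProductSpace.
Variable R : realType.
Variable X : lmodType R[i].
Variable ip : X -> X -> R[i].
Hypothesis ipP : inner_product ip.

Lemma ip2xx (p : X * X) : ip2 ip p p = (sqnorm ip p.1 + sqnorm ip p.2)%:C.
Proof. by rewrite /ip2 !(ipxx ipP) rmorphD. Qed.

Lemma sqnorm2_eq0 (x y : X) :
  sqnorm ip x + sqnorm ip y = 0 -> x = 0 /\ y = 0.
Proof.
have := sqnorm_ge0 ipP x; have := sqnorm_ge0 ipP y => y_ge0 x_ge0 xy0.
by split; apply: (sqnorm_eq0 ipP); lra.
Qed.

Lemma inner_product_ip2 : inner_product (ip2 ip).
Proof.
split.
- by move=> a p q r; rewrite /ip2 /= !(ipL ipP); ring.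
- by move=> p q; rewrite /ip2 (ipC ipP p.1) (ipC ipP p.2) rmorphD.
- by move=> p; rewrite ip2xx lecR addr_ge0 // sqnorm_ge0.
- by move=> [x y]; rewrite ip2xx => -[/sqnorm2_eq0[/= -> ->]].
Qed.

Lemma cvg_to_ip2 (u : nat -> X * X) (p : X * X) :
  cvg_to ip (fun n => (u n).1) p.1 -> cvg_to ip (fun n => (u n).2) p.2 ->
  cvg_to (ip2 ip) u p.
Proof.
move=> u1 u2 eps /gt0_real_complex[-> e0].
have pos : 0 < (complex.Re eps / 2)%:C by rewrite ltcR divr_gt0.
have [N1 lt1] := u1 _ pos; have [N2 lt2] := u2 _ pos.
exists (maxn N1 N2) => n le_Nn; rewrite ip2xx ltcR /=.
have := lt1 n (leq_trans (leq_maxl _ _) le_Nn).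
have := lt2 n (leq_trans (leq_maxr _ _) le_Nn).
by rewrite !(ipxx ipP) !ltcR; lra.
Qed.

Lemma hilbert_ip2 : (forall u, cauchy ip u -> exists x, cvg_to ip u x) ->
  hilbert (ip2 ip).
Proof.
move=> complete; split; first exact: inner_product_ip2.
move=> u cu.
have cauchy_proj (f : X * X -> X) :
  (forall p, sqnorm ip (f p) <= sqnorm ip p.1 + sqnorm ip p.2) ->
  (forall p q, f p - f q = f (p.1 - q.1, p.2 - q.2)) ->
  cauchy ip (fun n => f (u n)).
  move=> f_le fB eps /gt0_real_complex[-> e0].
  have [N lt_e] := cu _ (ltac:(by rewrite ltcR) : 0 < (complex.Re eps)%:C).
  exists N => m n le_Nm le_Nn; rewrite fB (ipxx ipP) ltcR.
  by apply: le_lt_trans (f_le _) _; rewrite -ltcR -ip2xx; apply: lt_e.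
have [x1 ux1] : exists x1, cvg_to ip (fun n => (u n).1) x1.
  apply: complete; apply: cauchy_proj => // p.
  by have := sqnorm_ge0 ipP p.2; lra.
have [x2 ux2] : exists x2, cvg_to ip (fun n => (u n).2) x2.
  apply: complete; apply: cauchy_proj => // p.
  by have := sqnorm_ge0 ipP p.1; lra.
by exists (x1, x2); apply: cvg_to_ip2.
Qed.

End ProductSpace.

Section Relations.
Variable R : realType.
Variable X : lmodType R[i].
Variable ip : X -> X -> R[i].
Hypothesis hX : hilbert ip.
Let ipP : inner_product ip := proj1 hX.
Implicit Types P Q T : X * X -> Prop.

Lemma linrel_adjoint T : linrel (adjoint ip T).
Proof.
split=> [x y _|a p q Tp Tq x y Txy] /=; first by rewrite !(ip0l ipP).
by rewrite !(ipL ipP) (Tp x y Txy) (Tq x y Txy).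
Qed.

Lemma subspace_dom T : linrel T -> subspace (dom T).
Proof.
case=> T0 TP; split=> [|a x y [x' Tx] [y' Ty]]; first by exists 0.
by exists (a *: x' + y'); exact: (TP a (x, x') (y, y') Tx Ty).
Qed.

Lemma subspace_linrel T : linrel T -> subspace T.
Proof. by case=> T0 TP; split => // a p q; apply: TP. Qed.

Lemma adjoint_anti P Q : Defs.subrel P Q -> Defs.subrel (adjoint ip Q) (adjoint ip P).
Proof. by move=> PQ p Qp x y Pxy; apply/Qp/PQ. Qed.

Lemma adjoint_sym P Q : Defs.subrel P (adjoint ip Q) -> Defs.subrel Q (adjoint ip P).
Proof.
move=> PQ [x y] Qxy a b Pab /=.
by rewrite (ipC ipP a y) (ipC ipP b x) (PQ _ Pab x y Qxy).
Qed.

Lemma sub_adjoint2 T : Defs.subrel T (adjoint ip (adjoint ip T)).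
Proof. exact/adjoint_sym. Qed.

(* [p] minus its projection onto [T] is orthogonal to [T], i.e. rotated it lies
   in [T^*]; being also in [T^**], it is orthogonal to itself. *)
Lemma adjoint2_sub T : closed_linrel ip T -> Defs.subrel (adjoint ip (adjoint ip T)) T.
Proof.
move=> cT p Tp.
have [m [Tm orth]] := orthogonal_projection (inner_product_ip2 ipP) p
  (subspace_linrel cT.1) (hilbert_ip2 ipP hX.2) cT.2.
set r := p - m.
have T2r : adjoint ip (adjoint ip T) r.
  exact: subspaceB (subspace_linrel (linrel_adjoint _)) Tp (sub_adjoint2 Tm).
have T1r : adjoint ip T (- r.2, r.1).
  move=> x y Txy /=; have := orth (x, y) Txy; rewrite /ip2 /= (ipNl ipP).
  by move=> orth_xy; apply/eqP; rewrite -subr_eq0 opprK; apply/eqP.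
have := T2r _ _ T1r; rewrite (ipNr ipP) !(ipxx ipP) => r_self.
have : (sqnorm ip r.1 + sqnorm ip r.2)%:C = 0 by rewrite rmorphD /= -r_self addNr.
case=> /(sqnorm2_eq0 ipP)[r1 r2].
have : r = 0 by rewrite [r]surjective_pairing /= r1 r2.
by move/eqP; rewrite subr_eq0 => /eqP ->.
Qed.

Lemma subspace_rinf T : linrel T -> subspace (rinf T).
Proof.
case=> T0 TP; split=> [|a p q [Tp p1] [Tq q1]]; first by split.
by split; [apply: TP | rewrite /= p1 q1 scaler0 addr0].
Qed.

Lemma rinf_seq_closed T : closed_linrel ip T -> seq_closed (ip2 ip) (rinf T).
Proof.
move=> [_ cT] u x Tu ux; split; first by apply: (cT u x) => // n; case: (Tu n).
apply: (sqnorm_eq0 ipP); apply/eqP; rewrite eq_le sqnorm_ge0 // andbT.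
apply/ler_addgt0Pr => e e0; rewrite add0r.
have [N lt_e] := ux _ (ltac:(by rewrite ltcR) : 0 < e%:C).
have := lt_e N (leqnn N); rewrite (ip2xx ipP) ltcR /= (proj2 (Tu N)) sub0r.
by rewrite (sqnormN ipP); have := sqnorm_ge0 ipP ((u N).2 - x.2); lra.
Qed.

(* Project [(0, y)] onto [P_oo]: the remainder [(0, y0)] lies in [Q^*] and is
   orthogonal to [P_oo]; it is also orthogonal to [P_s], which lies in the
   operator part of [Q^*], so [y0] is in the kernel of [P^*]. *)
Lemma mul0_adjoint_sub P Q : closed_linrel ip P -> Defs.subrel P (adjoint ip Q) ->
  restr (rs ip (adjoint ip Q)) (dom P) = rs ip P ->
  (forall x, mul0 (adjoint ip Q) x -> ker (adjoint ip P) x -> x = 0) ->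
  forall y, mul0 (adjoint ip Q) y -> mul0 P y.
Proof.
move=> cP PQ Ps Q0P0 y Q0y.
have proj_rinf := orthogonal_projection (inner_product_ip2 ipP) _
  (subspace_rinf cP.1) (hilbert_ip2 ipP hX.2) (rinf_seq_closed cP).
have [m [[Pm m1] orth_m]] := proj_rinf (0, y).
set y0 := y - m.2.
have my0 : (0, y) - m = (0, y0).
  by rewrite [m]surjective_pairing m1 /=; congr pair; rewrite subr0.
have Q0y0 : adjoint ip Q (0, y0).
  by rewrite -my0; apply: subspaceB (subspace_linrel (linrel_adjoint _)) Q0y (PQ _ Pm).
suff /(Q0P0 _ Q0y0)/eqP : ker (adjoint ip P) y0.
  by rewrite subr_eq0 => /eqP ->; rewrite /mul0 -m1 -surjective_pairing.
move=> x z Pxz /=; rewrite (ip0l ipP).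
have [m' [[Pm' m'1] orth_m']] := proj_rinf (x, z).
have Ps_q : rs ip P ((x, z) - m').
  split=> [|q0 /orth_m' //]; exact: subspaceB (subspace_linrel cP.1) Pxz Pm'.
rewrite -Ps in Ps_q; case: Ps_q => -[_ orth_q] _.
have := orth_q (0, y0) (conj Q0y0 erefl); rewrite /ip2 /= (ip0r ipP) add0r.
have := orth_m m' (conj Pm' m'1); rewrite my0 /ip2 /= (ip0l ipP) add0r.
move=> orth_y0m orth_qy0.
by rewrite -[z](subrK m'.2) (ipDr ipP) orth_y0m addr0 (ipC ipP) orth_qy0 conjc0.
Qed.

Lemma dom_section T : exists Y : X -> X, forall x, dom T x -> T (x, Y x).
Proof.
have /choice[Y TY] : forall x, exists y, dom T x -> T (x, y).
  by move=> x; case: (pselect (dom T x)) => [[y Txy]|nTx]; [exists y | exists 0].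
by exists Y.
Qed.

Section DomainDuality.
Variables P Q P' Q' : X * X -> Prop.
Hypotheses (lP : linrel P) (lQ : linrel Q) (lP' : linrel P') (lQ' : linrel Q').
Hypotheses (PQ : Defs.subrel P Q) (P'Q' : Defs.subrel P' Q').
Hypotheses (Q'P : Defs.subrel Q' (adjoint ip P)) (P'Q : Defs.subrel P' (adjoint ip Q)).
Hypotheses (Q0P0 : forall y, mul0 Q y -> mul0 P y)
           (Q'0P'0 : forall y, mul0 Q' y -> mul0 P' y).
Hypotheses (domQ' : forall f h, Q' (f, h) -> adjoint ip Q (f, h) -> dom P' f)
           (domQ : forall x y, Q (x, y) -> adjoint ip Q' (x, y) -> dom P x).

(* The multivalued parts are invisible to [Q'] resp. [Q], so
   [<f, y> - <h, x>] depends only on [x] and [f]. *)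
Lemma exists_boundary_form : exists g : X -> X -> R[i],
  forall x y f h, Q (x, y) -> Q' (f, h) -> g x f = ip f y - ip h x.
Proof.
have [Y QY] := dom_section Q; have [G Q'G] := dom_section Q'.
exists (fun x f => ip f (Y x) - ip (G f) x) => x y f h Qxy Q'fh.
have QxY := QY x (ex_intro _ y Qxy); have Q'fG := Q'G f (ex_intro _ h Q'fh).
have P0 : P (0, Y x - y).
  apply: Q0P0; have := subspaceB (subspace_linrel lQ) QxY Qxy.
  by change (Q (x - x, Y x - y) -> Q (0, Y x - y)); rewrite subrr.
have P'0 : P' (0, G f - h).
  apply: Q'0P'0; have := subspaceB (subspace_linrel lQ') Q'fG Q'fh.
  by change (Q' (f - f, G f - h) -> Q' (0, G f - h)); rewrite subrr.
have := Q'P Q'fG P0; rewrite /= (ip0r ipP) (ipBr ipP) => /esym/eqP.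
rewrite subr_eq0 => /eqP ->.
have := P'Q P'0 Qxy; rewrite /= (ip0l ipP) (ipBl ipP) => /eqP.
by rewrite subr_eq0 => /eqP ->.
Qed.

Lemma qdim_dom_duality : qdim (dom Q) (dom P) = qdim (dom Q') (dom P').
Proof.
have [g gE] := exists_boundary_form.
have g_lin x f1 f2 a : dom Q x -> dom Q' f1 -> dom Q' f2 ->
    g x (a *: f1 + f2) = a * g x f1 + g x f2.
  move=> [y Qxy] [h1 Q'1] [h2 Q'2].
  have Q'a := proj2 lQ' a _ _ Q'1 Q'2.
  rewrite (gE _ _ _ _ Qxy Q'a) (gE _ _ _ _ Qxy Q'1) (gE _ _ _ _ Qxy Q'2) /=.
  by rewrite !(ipL ipP); ring.
have g_conj x1 x2 a f : dom Q x1 -> dom Q x2 -> dom Q' f ->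
    g (a *: x1 + x2) f = Num.conj a * g x1 f + g x2 f.
  move=> [y1 Q1] [y2 Q2] [h Q'fh].
  have Qa := proj2 lQ a _ _ Q1 Q2.
  rewrite (gE _ _ _ _ Qa Q'fh) (gE _ _ _ _ Q1 Q'fh) (gE _ _ _ _ Q2 Q'fh) /=.
  by rewrite !(ipDr ipP) !(ipZr ipP); ring.
have conj_eq0 (z : R[i]) : Num.conj z = 0 -> z = 0.
  by move/eqP; rewrite conjC_eq0 => /eqP.
apply: (@qdim_pairing _ _ _ _ _ _ g (fun f x => Num.conj (g x f)));
  try exact: subspace_dom; split.
- move=> x f [y Pxy] [h Q'fh].
  by rewrite (gE _ _ _ _ (PQ Pxy) Q'fh) (Q'P Q'fh Pxy) subrr.
- by move=> x1 x2 a f Q1 Q2 Q'f g1 g2; rewrite g_conj // g1 g2 mulr0 addr0.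
- exact: g_lin.
- move=> f [h Q'fh] gf0; apply: (domQ' Q'fh) => x y Qxy /=.
  have := gf0 x (ex_intro _ y Qxy); rewrite (gE _ _ _ _ Qxy Q'fh) => /eqP.
  by rewrite subr_eq0 => /eqP ->.
- move=> f x [h P'fh] [y Qxy].
  by rewrite (gE _ _ _ _ Qxy (P'Q' P'fh)) (P'Q P'fh Qxy) subrr rmorph0.
- move=> f1 f2 a x Q'1 Q'2 Qx /conj_eq0 g1 /conj_eq0 g2.
  by rewrite g_lin // g1 g2 mulr0 addr0 rmorph0.
- by move=> f x1 x2 a Q'f Q1 Q2; rewrite g_conj // rmorphD rmorphM /= conjCK.
- move=> x [y Qxy] gx0; apply: (domQ Qxy) => f h Q'fh /=.
  have := gx0 f (ex_intro _ h Q'fh); move/conj_eq0; rewrite (gE _ _ _ _ Qxy Q'fh).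
  by move/eqP; rewrite subr_eq0 (ipC ipP f y) => /eqP ->; rewrite -(ipC ipP).
Qed.

End DomainDuality.

End Relations.

Section ExtensionDefects.
Variable R : realType.
Variable X : lmodType R[i].
Variable ip : X -> X -> R[i].
Hypothesis hX : hilbert ip.
Variables A B At : X * X -> Prop.
Hypotheses (cA : closed_linrel ip A) (cB : closed_linrel ip B)
           (cAt : closed_linrel ip At).
Hypotheses (AAt : Defs.subrel A At) (AtB : Defs.subrel At (adjoint ip B)).
Hypotheses (B0A0 : forall y, mul0 (adjoint ip B) y -> mul0 A y)
           (A0B0 : forall y, mul0 (adjoint ip A) y -> mul0 B y).

Lemma qdim_dom_extA :
  qdim (dom At) (dom A) = qdim (dom (adjoint ip A)) (dom (adjoint ip At)).
Proof.
apply: (qdim_dom_duality hX cA.1 cAt.1 (linrel_adjoint hX At)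
  (linrel_adjoint hX A)) => //.
- exact: adjoint_anti.
- by move=> y At0y; exact: B0A0 (AtB At0y).
- by move=> g A0g; exact (adjoint_sym hX AtB (A0B0 A0g)).
- by move=> f g _ At'fg; exists g.
- by move=> x y _ A2xy; exists y; exact (adjoint2_sub hX cA A2xy).
Qed.

Lemma qdim_dom_extB :
  qdim (dom (adjoint ip B)) (dom At) = qdim (dom (adjoint ip At)) (dom B).
Proof.
apply: (qdim_dom_duality hX cAt.1 (linrel_adjoint hX B) cB.1
  (linrel_adjoint hX At)).
- exact: AtB.
- exact (adjoint_sym hX AtB).
- by [].
- exact (sub_adjoint2 hX (T := B)).
- by move=> y B0y; exact: AAt (B0A0 B0y).
- by move=> g At0g; exact: A0B0 (adjoint_anti AAt At0g).
- by move=> f g _ B2fg; exists g; exact (adjoint2_sub hX cB B2fg).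
- by move=> x y _ At2xy; exists y; exact (adjoint2_sub hX cAt At2xy).
Qed.

Lemma ndef_split : ndef ip A B =
  eadd (qdim (dom (adjoint ip A)) (dom (adjoint ip At)))
       (qdim (dom (adjoint ip At)) (dom B)).
Proof.
apply: qdim_trans; try exact: subspace_dom (linrel_adjoint hX _).
- exact: subspace_dom cB.1.
- by move=> x [y Bxy]; exists y; exact (adjoint_sym hX AtB Bxy).
- by move=> x [y At'xy]; exists y; exact (adjoint_anti AAt At'xy).
Qed.

End ExtensionDefects.

Lemma eaddC (a b : enat) : eadd a b = eadd b a.
Proof. by case: a; case: b => //= m n; rewrite addnC. Qed.

Theorem theorem3p1 (R : realType) (X : lmodType R[i]) (ip : X -> X -> R[i])
  (hX : hilbert ip) (A B At : X * X -> Prop)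
  (hAB : dual_pair ip A B)
  (hsA : restr (rs ip (adjoint ip A)) (dom B) = rs ip B)
  (hsB : restr (rs ip (adjoint ip B)) (dom A) = rs ip A)
  (h0B : forall x, mul0 (adjoint ip B) x -> ker (adjoint ip A) x -> x = 0)
  (h0A : forall x, mul0 (adjoint ip A) x -> ker (adjoint ip B) x -> x = 0)
  (hExt : Ext ip A B At) :
  (ndef ip A B = eadd (qdim (dom (adjoint ip B)) (dom At))
                      (qdim (dom (adjoint ip A)) (dom (adjoint ip At)))
   /\ ndef ip A B = eadd (qdim (dom At) (dom A))
                      (qdim (dom (adjoint ip At)) (dom B)))
  /\ (quasi_selfadjoint ip A B At ->
      exists k : enat,
        [/\ ndef ip A B = eadd k k,
            qdim (dom (adjoint ip B)) (dom At) = k,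
            qdim (dom (adjoint ip A)) (dom (adjoint ip At)) = k,
            qdim (dom At) (dom A) = k &
            qdim (dom (adjoint ip At)) (dom B) = k]).
Proof.
case: hAB => cA [cB AB]; case: hExt => cAt [AAt AtB].
have B0A0 := mul0_adjoint_sub hX cA AB hsB h0B.
have A0B0 := mul0_adjoint_sub hX cB (adjoint_sym hX AB) hsA h0A.
have dimA := qdim_dom_extA hX cA cAt AAt AtB B0A0 A0B0.
have dimB := qdim_dom_extB hX cB cAt AAt AtB B0A0 A0B0.
rewrite (ndef_split hX cB AAt AtB); split; first split.
- by rewrite -dimB eaddC.
- by rewrite dimA.
move=> [_ qsa]; exists (qdim (dom At) (dom A)); split.
- by rewrite -dimA -qsa.
- by rewrite dimB -qsa.
- by rewrite dimA.
- by [].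
- by rewrite qsa.
Qed.
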